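(* For all types $A$, $B$, $C$: if $A \equiv C$, $C \equiv B$, $A \simeq C$ and $C \simeq B$, then $A \simeq B$.
   Context: Types and rows share one grammar: $A,B,C,\rho ::= X \mid \alpha \mid \star \mid \iota \mid A\to B \mid \forall X{:}K.\,A \mid [\rho] \mid \langle\rho\rangle \mid \cdot \mid \ell{:}A;\rho$, where $X$ ranges over type variables (bound by $\forall$), $\alpha$ over type names, $\star$ is the dynamic type (also serving as the dynamic row), $\iota$ over base types, $[\rho]$ and $\langle\rho\rangle$ are record and variant types, $\cdot$ is the empty row, $\ell$ ranges over labels, and $K\in\{\mathsf T,\mathsf R\}$ is a kind. Types are identified up to renaming of bound variables; $\mathit{ftv}(A)$ is the set of free type variables. Row matching $\rho \triangleright_\ell A,\rho'$ is defined by: $(\ell{:}A;\rho)\triangleright_\ell A,\rho$; if $\ell'\neq\ell$ and $\rho\triangleright_\ell A,\rho'$ then $(\ell'{:}B;\rho)\triangleright_\ell A,(\ell'{:}B;\rho')$; and $\star\triangleright_\ell \star,\star$. $\mathbf{QPoly}(A)$ holds iff $A$ is not of the form $\forall X{:}K.\,B$ and $\star$ occurs in $A$. Type equivalence $\equiv$ is the least equivalence relation that is a congruence for $\to$, $\forall X{:}K.\,-$, $[-]$, $\langle-\rangle$ and $\ell{:}-;-$, and contains $\ell{:}A;\ell'{:}B;\rho \equiv \ell'{:}B;\ell{:}A;\rho$ whenever $\ell\neq\ell'$. Consistency $\simeq$ is defined inductively: $A\simeq A$; $\star\simeq A$; $A\simeq\star$; $A_1\to A_2\simeq B_1\to B_2$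 if $A_1\simeq B_1$ and $A_2\simeq B_2$; $\forall X{:}K.A\simeq\forall X{:}K.B$ if $A\simeq B$; $\forall X{:}K.A\simeq B$ if $\mathbf{QPoly}(B)$, $X\notin\mathit{ftv}(B)$ and $A\simeq B$; $A\simeq\forall X{:}K.B$ if $\mathbf{QPoly}(A)$, $X\notin\mathit{ftv}(A)$ and $A\simeq B$; $[\rho_1]\simeq[\rho_2]$ and $\langle\rho_1\rangle\simeq\langle\rho_2\rangle$ if $\rho_1\simeq\rho_2$; $\ell{:}A;\rho_1\simeq B$ if $B\triangleright_\ell B',\rho_2$, $A\simeq B'$ and $\rho_1\simeq\rho_2$; $A\simeq \ell{:}B;\rho_2$ if $A\triangleright_\ell A',\rho_1$, $A'\simeq B$ and $\rho_1\simeq\rho_2$. *)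

From Stdlib Require Import Arith.

Inductive kind : Type := KT | KR.

Definition label := nat.
Definition tyname := nat.
Definition basety := nat.

(* A,B,C,rho ::= X | alpha | * | iota | A -> B | forall X:K. A | [rho] | <rho> | . | l:A;rho
   Type variables X are de Bruijn indices (types identified up to alpha). *)
Inductive ty : Type :=
  | TVar (n : nat)
  | TName (a : tyname)
  | TDyn
  | TBase (i : basety)
  | TArr (A B : ty)
  | TAll (K : kind) (A : ty)
  | TRec (r : ty)
  | TVariant (r : ty)
  | REmpty
  | RExt (l : label) (A : ty) (r : ty).

Fixpoint shift (c : nat) (t : ty) : ty :=
  match t with
  | TVar n => if n <? c then TVar n else TVar (S n)
  | TName a => TName a
  | TDyn => TDyn
  | TBase i => TBase i
  | TArr A B => TArr (shift c A) (shift c B)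
  | TAll K A => TAll K (shift (S c) A)
  | TRec r => TRec (shift c r)
  | TVariant r => TVariant (shift c r)
  | REmpty => REmpty
  | RExt l A r => RExt l (shift c A) (shift c r)
  end.

Inductive rmatch : ty -> label -> ty -> ty -> Prop :=
  | rm_head : forall l A r, rmatch (RExt l A r) l A r
  | rm_tail : forall l l' A B r r',
      l' <> l -> rmatch r l A r' -> rmatch (RExt l' B r) l A (RExt l' B r')
  | rm_dyn : forall l, rmatch TDyn l TDyn TDyn.

Fixpoint dyn_occurs (t : ty) : Prop :=
  match t with
  | TVar _ | TName _ | TBase _ | REmpty => False
  | TDyn => True
  | TArr A B => dyn_occurs A \/ dyn_occurs B
  | TAll _ A => dyn_occurs A
  | TRec r | TVariant r => dyn_occurs r
  | RExt _ A r => dyn_occurs A \/ dyn_occurs r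
  end.

Definition QPoly (A : ty) : Prop :=
  (~ exists K B, A = TAll K B) /\ dyn_occurs A.

Inductive tyequiv : ty -> ty -> Prop :=
  | eq_refl' : forall A, tyequiv A A
  | eq_sym' : forall A B, tyequiv A B -> tyequiv B A
  | eq_trans' : forall A B C, tyequiv A B -> tyequiv B C -> tyequiv A C
  | eq_arr : forall A1 A2 B1 B2,
      tyequiv A1 B1 -> tyequiv A2 B2 -> tyequiv (TArr A1 A2) (TArr B1 B2)
  | eq_all : forall K A B, tyequiv A B -> tyequiv (TAll K A) (TAll K B)
  | eq_rec : forall r1 r2, tyequiv r1 r2 -> tyequiv (TRec r1) (TRec r2)
  | eq_variant : forall r1 r2, tyequiv r1 r2 -> tyequiv (TVariant r1) (TVariant r2)
  | eq_ext : forall l A B r1 r2,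
      tyequiv A B -> tyequiv r1 r2 -> tyequiv (RExt l A r1) (RExt l B r2)
  | eq_swap : forall l l' A B r,
      l <> l' -> tyequiv (RExt l A (RExt l' B r)) (RExt l' B (RExt l A r)).

(* consistency.  The side condition X notin ftv(B) for  forall X:K.A ~ B
   is rendered in de Bruijn form by comparing A with (shift 0 B). *)
Inductive consistent : ty -> ty -> Prop :=
  | c_refl : forall A, consistent A A
  | c_dynl : forall A, consistent TDyn A
  | c_dynr : forall A, consistent A TDyn
  | c_arr : forall A1 A2 B1 B2,
      consistent A1 B1 -> consistent A2 B2 -> consistent (TArr A1 A2) (TArr B1 B2)
  | c_all : forall K A B, consistent A B -> consistent (TAll K A) (TAll K B)
  | c_alll : forall K A B, QPoly B -> consistent A (shift 0 B) -> consistent (TAll K A) B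
  | c_allr : forall K A B, QPoly A -> consistent (shift 0 A) B -> consistent A (TAll K B)
  | c_rec : forall r1 r2, consistent r1 r2 -> consistent (TRec r1) (TRec r2)
  | c_variant : forall r1 r2, consistent r1 r2 -> consistent (TVariant r1) (TVariant r2)
  | c_extl : forall l A r1 B B' r2,
      rmatch B l B' r2 -> consistent A B' -> consistent r1 r2 ->
      consistent (RExt l A r1) B
  | c_extr : forall l A A' r1 B r2,
      rmatch A l A' r1 -> consistent A' B -> consistent r1 r2 ->
      consistent A (RExt l B r2).

(* Type equivalence is contained in consistency, so A ≡ C ≡ B alone gives
   A ≃ B.  Consistency is not
   transitive, so the inclusion cannot be proved by induction on ≡ directly.
   Instead we characterize ≡ syntactically: a row ℓ:A;ρ is equivalent to any
   row from which a field ℓ:A' can be extracted, leaving a remainder ρ', with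
   A ≡ A' and ρ ≡ ρ'.  This relation is transitive (extractions of distinct
   labels commute), symmetric, contains the swap axiom, and each of its rules
   is an instance of a consistency rule. *)

Inductive rsplit : ty -> label -> ty -> ty -> Prop :=
  | rsplit_head : forall l A r, rsplit (RExt l A r) l A r
  | rsplit_tail : forall l l' A B r r',
      l' <> l -> rsplit r l A r' -> rsplit (RExt l' B r) l A (RExt l' B r').

Inductive perm_equiv : ty -> ty -> Prop :=
  | pe_var : forall n, perm_equiv (TVar n) (TVar n)
  | pe_name : forall a, perm_equiv (TName a) (TName a)
  | pe_dyn : perm_equiv TDyn TDyn
  | pe_base : forall i, perm_equiv (TBase i) (TBase i)
  | pe_empty : perm_equiv REmpty REmpty
  | pe_arr : forall A1 A2 B1 B2,
      perm_equiv A1 B1 -> perm_equiv A2 B2 -> perm_equiv (TArr A1 A2) (TArr B1 B2)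
  | pe_all : forall K A B, perm_equiv A B -> perm_equiv (TAll K A) (TAll K B)
  | pe_rec : forall r1 r2, perm_equiv r1 r2 -> perm_equiv (TRec r1) (TRec r2)
  | pe_variant : forall r1 r2,
      perm_equiv r1 r2 -> perm_equiv (TVariant r1) (TVariant r2)
  | pe_ext : forall l A r Y A' r',
      rsplit Y l A' r' -> perm_equiv A A' -> perm_equiv r r' ->
      perm_equiv (RExt l A r) Y.

#[local] Hint Constructors rsplit perm_equiv rmatch consistent : core.

Lemma rsplit_rmatch : forall r l A r', rsplit r l A r' -> rmatch r l A r'.
Proof. induction 1; eauto. Qed.

Lemma perm_equiv_consistent : forall A B, perm_equiv A B -> consistent A B.
Proof. induction 1; eauto using rsplit_rmatch. Qed.

Lemma perm_equiv_refl : forall A, perm_equiv A A.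
Proof. induction A; eauto. Qed.

Lemma rsplit_comm : forall r l0 B r0, rsplit r l0 B r0 ->
  forall l A r1, l0 <> l -> rsplit r0 l A r1 ->
  exists r', rsplit r l A r' /\ rsplit r' l0 B r1.
Proof.
  induction 1 as [| l0' l0 B0 B r r0 Hne0 Hsplit IH];
    intros l1 A1 r1 Hne Hsplit1.
  - eauto.
  - inversion Hsplit1 as [| ? ? ? ? ? r1' Hne1 Hsplit0]; subst.
    + eauto.
    + destruct (IH _ _ _ Hne Hsplit0) as (r' & H1 & H2).
      exists (RExt l0 B r'). eauto.
Qed.

Lemma perm_equiv_rsplit : forall r l A r', rsplit r l A r' ->
  forall s, perm_equiv r s ->
  exists A' s', rsplit s l A' s' /\ perm_equiv A A' /\ perm_equiv r' s'.
Proof.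
  induction 1 as [| l l' A B r r' Hne Hsplit IH]; intros s Hs;
    inversion Hs as [| | | | | | | | | l0 B0 r0 s0 B' s1 Hs0 HB Hr]; subst.
  - eauto.
  - destruct (IH _ Hr) as (A' & s2 & Hs2 & HA & Hr2).
    destruct (rsplit_comm _ _ _ _ Hs0 _ _ _ Hne Hs2) as (s' & H1 & H2).
    exists A', s'. eauto.
Qed.

Lemma perm_equiv_trans : forall A B C,
  perm_equiv A B -> perm_equiv B C -> perm_equiv A C.
Proof.
  intros A B C HAB; revert C.
  induction HAB as [| | | | | | | | | l A r Y A' r' Hsplit _ IHA _ IHr];
    intros C HBC; try (inversion HBC; subst; eauto; fail).
  destruct (perm_equiv_rsplit _ _ _ _ Hsplit _ HBC) as (A2 & r2 & Hs & HA & Hr).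
  exact (pe_ext _ _ _ _ _ _ Hs (IHA _ HA) (IHr _ Hr)).
Qed.

Lemma rsplit_perm_equiv_ext : forall r l A' r', rsplit r l A' r' ->
  forall A s, perm_equiv A' A -> perm_equiv r' s -> perm_equiv r (RExt l A s).
Proof.
  induction 1; intros A0 s Ha Hr.
  - eauto.
  - inversion Hr; subst. eauto.
Qed.

Lemma perm_equiv_sym : forall A B, perm_equiv A B -> perm_equiv B A.
Proof. induction 1; eauto using rsplit_perm_equiv_ext. Qed.

Lemma perm_equiv_swap : forall l l' A B r, l <> l' ->
  perm_equiv (RExt l A (RExt l' B r)) (RExt l' B (RExt l A r)).
Proof.
  intros l l' A B r Hne.
  apply pe_ext with A (RExt l' B r); auto using perm_equiv_refl.
Qed.

Lemma tyequiv_perm_equiv : forall A B, tyequiv A B -> perm_equiv A B.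
Proof.
  induction 1;
    eauto using perm_equiv_refl, perm_equiv_sym, perm_equiv_trans, perm_equiv_swap.
Qed.

Lemma tyequiv_consistent : forall A B, tyequiv A B -> consistent A B.
Proof. intros A B H. apply perm_equiv_consistent, tyequiv_perm_equiv, H. Qed.

Theorem mainTheorem6 : forall A B C : ty,
  tyequiv A C -> tyequiv C B -> consistent A C -> consistent C B ->
  consistent A B.
Proof.
  intros A B C HAC HCB _ _.
  apply tyequiv_consistent, eq_trans' with C; assumption.
Qed.
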